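(* Let $d=1$. There is a constant $c_1$ depending only on the dimension such that for all $N\ge1$, $$\text{i) } E_Q(Z(N)^2)\le \sum_{n=0}^N\left(c_1c^2_{N,1}N^{1/2}\right)^n,\qquad \text{ii) } E_Q(K(N)^2)\le N^2\sum_{n=0}^N\left(c_1c^2_{N,1}N^{1/2}\right)^n.$$
   Context: $P^N_0$ is the uniform probability measure on nearest-neighbour walks $\omega:\{0,\dots,N\}\to\mathbb{Z}$ with $\omega(0)=0$, $|\omega(n)-\omega(n-1)|=1$ (each of weight $2^{-N}$). The environment $h=\{h(n,x):n\in\mathbb{N},x\in\mathbb{Z}\}$ consists of i.i.d. random variables with $h(n,x)=\pm1$ each with probability $1/2$ on a probability space $(H,\mathcal{G},Q)$, independent of the walk; $E_Q$ is expectation under $Q$. $(c_{N,1})$ is a sequence of positive numbers with $\lim_{N\to\infty}c_{N,1}^2N^{1/2}=0$. $Z(N)=\int\prod_{n=1}^N[1+c_{N,1}h(n,\omega(n))]\,dP^N_0(\omega)$ and $K(N)=\int\prod_{n=1}^N[1+c_{N,1}h(n,\omega(n))]\,\omega(N)^2\,dP^N_0(\omega)$. *)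

From HB Require Import structures.
From mathcomp Require Import all_boot all_order all_algebra.
From mathcomp Require Import all_classical all_reals all_analysis.
Set Implicit Arguments. Unset Strict Implicit. Unset Printing Implicit Defensive.
Import Order.TTheory GRing.Theory Num.Theory.
Local Open Scope ring_scope.

(* d = 1.  A nearest-neighbour walk of length N on Z started at 0 is encoded
   by its sequence of steps: step i (i < N) is +1 if true, -1 if false.
   The uniform measure P^N_0 gives each such walk weight 2^-N. *)
Definition walk (N : nat) := {ffun 'I_N -> bool}.

Definition wpos (N : nat) (w : walk N) (n : nat) : int :=
  \sum_(i < N | (i < n)%N) (if w i then 1 else -1).

(* Environment restricted to the finite box that the walks can see:
   times n = 1..N (index n-1) and sites x with |x| <= N (index x+N).
   Each h(n,x) = +1 (true) or -1 (false). *)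
Definition env (N : nat) := {ffun 'I_N -> {ffun 'I_(N + N).+1 -> bool}}.

(* h(n, x) for n = i+1 (i : 'I_N) and site x; x is only used with |x| <= N. *)
Definition hval {R : realType} (N : nat) (h : env N) (i : 'I_N) (x : int) : R :=
  if h i (inord (absz (x + N%:Z))) then 1 else -1.

Definition Zpart {R : realType} (N : nat) (c : R) (h : env N) : R :=
  (2%:R ^- N) * \sum_(w : walk N)
     \prod_(i < N) (1 + c * hval h i (wpos w i.+1)).

Definition Kpart {R : realType} (N : nat) (c : R) (h : env N) : R :=
  (2%:R ^- N) * \sum_(w : walk N)
     (\prod_(i < N) (1 + c * hval h i (wpos w i.+1))) * ((wpos w N)%:~R ^+ 2).

(* E_Q of a function of the (finitely many relevant) i.i.d. uniform +-1
   variables h(n,x): average over all sign assignments on the box. *)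
Definition EQ {R : realType} (N : nat) (f : env N -> R) : R :=
  (#|{: env N}|%:R)^-1 * \sum_(h : env N) f h.

(* Averaging over the environment turns E_Q(Z(N)^2) and E_Q(K(N)^2) into expectations, over two
   independent simple walks X and Y, of [prod_n (1 + c^2 1{X_n = Y_n})] times 1, resp. times
   [X_N^2 Y_N^2]. Decomposing according to the first meeting time gives a renewal equation whose
   kernel is the meeting probability [P(X_t = Y_t) = C(2t,t)/4^t <= (2t+1)^(-1/2)]; since its
   partial sums are at most [2 sqrt N], induction yields the geometric bound with c_1 = 8.
   For K one uses [X^2 Y^2 <= ((X + Y)^4 + (X - Y)^4)/16]: the (X - Y)^4 term satisfies the same
   renewal equation, while the weights only see X - Y, and given the path of X - Y the sum X + Y
   is a walk with at most N steps, so its fourth moment stays of order N^2. *)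

From HB Require Import structures.
From mathcomp Require Import all_boot all_order all_algebra.
From mathcomp Require Import all_classical all_reals all_analysis.
From mathcomp Require Import ring lra zify.
Set Implicit Arguments. Unset Strict Implicit. Unset Printing Implicit Defensive.
Import Order.TTheory GRing.Theory Num.Theory.
Import numFieldNormedType.Exports.
Local Open Scope classical_set_scope.
Local Open Scope ring_scope.

Definition bsign {R : pzRingType} (b : bool) : R := if b then 1 else -1.

Section SignSums.
Variables (R : realType) (T : finType).
Implicit Types (p q : T) (g : {ffun T -> bool}).

Definition flipb p g : {ffun T -> bool} := [ffun j => if j == p then ~~ g j else g j].

Lemma flipbK p : involutive (flipb p).
Proof. by move=> g; apply/ffunP => j; rewrite !ffunE; case: eqP; rewrite ?negbK. Qed.

Lemma sum_flipb_odd p (F : {ffun T -> bool} -> R) :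
  (forall g, F (flipb p g) = - F g) -> \sum_(g : {ffun T -> bool}) F g = 0.
Proof.
move=> Fodd; have : \sum_(g : {ffun T -> bool}) F g = - \sum_(g : {ffun T -> bool}) F g.
  rewrite {1}(reindex_inj (inv_inj (flipbK p))) -sumrN.
  by apply: eq_bigr => g _; rewrite Fodd.
lra.
Qed.

Lemma sum_bsign p : \sum_(g : {ffun T -> bool}) bsign (g p) = 0 :> R.
Proof.
by apply: (@sum_flipb_odd p) => g; rewrite ffunE eqxx /bsign; case: (g p); rewrite ?opprK.
Qed.

Lemma sum_bsignM p q : q != p -> \sum_(g : {ffun T -> bool}) bsign (g p) * bsign (g q) = 0 :> R.
Proof.
move=> qp; apply: (@sum_flipb_odd p) => g.
by rewrite !ffunE eqxx (negbTE qp) /bsign; case: (g p); case: (g q) => /=; ring.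
Qed.

Lemma sum_bsign_pair (c : R) p q :
  \sum_(g : {ffun T -> bool}) (1 + c * bsign (g p)) * (1 + c * bsign (g q)) =
  #|{: {ffun T -> bool}}|%:R * (1 + c ^+ 2 * (p == q)%:R).
Proof.
have expand g : (1 + c * bsign (g p)) * (1 + c * bsign (g q)) =
    1 + (c * bsign (g p) + (c * bsign (g q) + c ^+ 2 * (bsign (g p) * bsign (g q)))).
  by ring.
under eq_bigr do rewrite expand.
rewrite !big_split /= -!mulr_sumr !sum_bsign !mulr0 !add0r sumr_const.
have [->|qp] := eqVneq q p; last by rewrite sum_bsignM // mulr0 !addr0 mulr1.
have sq1 g : bsign (g p) * bsign (g p) = 1 by rewrite /bsign; case: (g p); rewrite ?mulrNN mulr1.
by under eq_bigr do rewrite sq1; rewrite sumr_const mulr1 mulrDr mulr1 mulrC.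
Qed.

End SignSums.

Definition wcons N (b : bool) (w : walk N) : walk N.+1 :=
  [ffun i : 'I_N.+1 => if unlift ord0 i is Some j then w j else b].

Definition wtail N (w : walk N.+1) : walk N := [ffun j => w (lift ord0 j)].

Lemma sum_walkS (V : nmodType) N (F : walk N.+1 -> V) :
  \sum_(w : walk N.+1) F w = \sum_(b : bool) \sum_(w : walk N) F (wcons b w).
Proof.
rewrite pair_bigA /=.
pose g (w : walk N.+1) := (w ord0, wtail w).
pose h (p : bool * walk N) := wcons p.1 p.2.
have hK : cancel h g.
  move=> [b w]; rewrite /h /g /wtail /wcons /=; congr pair.
    by rewrite ffunE unlift_none.
  by apply/ffunP => j; rewrite !ffunE liftK.
have gK : cancel g h.
  move=> w; apply/ffunP => i; rewrite /h /g /wcons /wtail ffunE /=.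
  by case: (unliftP ord0 i) => [j ->|->]; rewrite ?ffunE.
by rewrite (reindex h) /=; [apply: eq_bigr => -[b w] | exists g].
Qed.

Lemma wpos0 N (w : walk N) : wpos w 0 = 0.
Proof. by rewrite /wpos big_pred0. Qed.

Lemma wpos_cons N b (w : walk N) k :
  wpos (wcons b w) k.+1 = bsign b + wpos w k.
Proof.
rewrite /wpos big_mkcond big_ord_recl /= /wcons ffunE unlift_none.
by congr (_ + _); rewrite [RHS]big_mkcond; apply: eq_bigr => i _; rewrite ffunE liftK.
Qed.

Lemma wpos_le N (w : walk N) n : `|wpos w n| <= N%:Z.
Proof.
rewrite /wpos big_mkcond /=; apply: le_trans (ler_norm_sum _ _ _) _.
apply: le_trans (_ : \sum_(i < N) (1 : int) <= _); last by rewrite sumr_const card_ord natz.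
by apply: ler_sum => i _; case: (i < n)%N; case: (w i); rewrite ?normrN ?normr1.
Qed.

Definition site N (x : int) : 'I_(N + N).+1 := inord (absz (x + N%:Z)).

Lemma eq_site N (x y : int) : `|x| <= N%:Z -> `|y| <= N%:Z ->
  (site N x == site N y) = (x == y).
Proof.
rewrite !ler_norml => /andP [x1 x2] /andP [y1 y2].
apply/eqP/eqP => [|->] //; rewrite /site => /(congr1 val).
by rewrite /= !inordK; lia.
Qed.

Section Replica.
Variable R : realType.
Implicit Types (u : R) (F G : int -> int -> R) (a b x y : int).

Definition avg4 F a b : R :=
  (F (a + 1) (b + 1) + F (a + 1) (b - 1) + F (a - 1) (b + 1) + F (a - 1) (b - 1)) / 4%:R.

Definition coinc x y : R := (x == y)%:R.

(* [replica u G N a b] is [E (prod_(n=1..N) (1 + u 1{X_n = Y_n})) G(X_N, Y_N)] for independent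
   simple random walks X, Y started at a and b: averaging the environment out of [Z(N)^2] or
   [K(N)^2] produces such two-replica expectations with [u = c^2]. *)
Fixpoint replica u G N : int -> int -> R :=
  if N is N'.+1 then avg4 (fun x y => (1 + u * coinc x y) * replica u G N' x y) else G.

Definition shift_invariant G := forall x y k, G (x + k) (y + k) = G x y.

Lemma avg4D F1 F2 a b : avg4 (fun x y => F1 x y + F2 x y) a b = avg4 F1 a b + avg4 F2 a b.
Proof. by rewrite /avg4 -mulrDl; congr (_ / _); ring. Qed.

Lemma avg4Z (c : R) F a b : avg4 (fun x y => c * F x y) a b = c * avg4 F a b.
Proof. by rewrite /avg4 mulrA; congr (_ / _); ring. Qed.

Lemma avg4Zr (c : R) F a b : avg4 (fun x y => F x y * c) a b = avg4 F a b * c.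
Proof. by rewrite /avg4 mulrAC; congr (_ / _); ring. Qed.

Lemma avg4_sum n (F : nat -> int -> int -> R) a b :
  avg4 (fun x y => \sum_(0 <= t < n) F t x y) a b = \sum_(0 <= t < n) avg4 (F t) a b.
Proof.
elim: n => [|n IH]; first by rewrite /avg4 !big_geq // !addr0 mul0r.
by rewrite big_nat_recr //= -IH -avg4D; under eq_fun do under eq_fun do rewrite big_nat_recr //.
Qed.

Lemma ler_avg4 F1 F2 a b : (forall x y, F1 x y <= F2 x y) -> avg4 F1 a b <= avg4 F2 a b.
Proof.
move=> le12; rewrite /avg4 ler_pM2r ?invr_gt0 ?ltr0n //.
by rewrite !lerD.
Qed.

Lemma coinc_ge0 x y : 0 <= coinc x y.
Proof. exact: ler0n. Qed.

Lemma coinc_shift_invariant : shift_invariant coinc.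
Proof. by move=> x y k; rewrite /coinc (inj_eq (addIr k)). Qed.

Lemma replica0S G N a b : replica 0 G N.+1 a b = avg4 (replica 0 G N) a b.
Proof. by rewrite /= /avg4 !mul0r !addr0 !mul1r. Qed.

Lemma replicaD u G1 G2 N a b :
  replica u (fun x y => G1 x y + G2 x y) N a b = replica u G1 N a b + replica u G2 N a b.
Proof.
elim: N a b => [|N IH] a b //=; rewrite -avg4D; congr avg4.
by do 2!apply/funext=> ?; rewrite IH mulrDr.
Qed.

Lemma replicaZ u (c : R) G N a b :
  replica u (fun x y => c * G x y) N a b = c * replica u G N a b.
Proof.
elim: N a b => [|N IH] a b //=; rewrite -avg4Z; congr avg4.
by do 2!apply/funext=> ?; rewrite IH mulrCA.
Qed.

Lemma replica_shift u G N a b k : shift_invariant G ->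
  replica u G N (a + k) (b + k) = replica u G N a b.
Proof.
move=> HG; elim: N a b => [|N IH] a b /=; first exact: HG.
by rewrite /avg4 !(addrAC _ k) !IH !coinc_shift_invariant.
Qed.

Lemma replica_diag u G N a : shift_invariant G -> replica u G N a a = replica u G N 0 0.
Proof. by move=> HG; rewrite -[in LHS](add0r a) replica_shift. Qed.

Section Nonnegative.
Variable u : R.
Hypothesis u_ge0 : 0 <= u.

Lemma coinc_weight_ge1 x y : 1 <= 1 + u * coinc x y.
Proof. by rewrite lerDl mulr_ge0 ?coinc_ge0. Qed.

Lemma replica_ge0 G N a b : (forall x y, 0 <= G x y) -> 0 <= replica u G N a b.
Proof.
move=> G0; elim: N a b => [|N IH] a b //=; rewrite /avg4 divr_ge0 //.
by rewrite !addr_ge0 // mulr_ge0 // (le_trans ler01 (coinc_weight_ge1 _ _)).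
Qed.

Lemma replica0_le G N a b : (forall x y, 0 <= G x y) -> replica 0 G N a b <= replica u G N a b.
Proof.
move=> G0; elim: N a b => [|N IH] a b //; rewrite replica0S; apply: ler_avg4 => x y.
apply: le_trans (IH x y) _; rewrite ler_peMl ?coinc_weight_ge1 //.
exact: replica_ge0.
Qed.

End Nonnegative.

Definition one2 : int -> int -> R := fun _ _ => 1.

Lemma replica0_one2 N a b : replica 0 one2 N a b = 1.
Proof. by elim: N a b => [|N IH] a b //; rewrite replica0S /avg4 !IH; field. Qed.

Lemma replica_one2_ge1 u N a b : 0 <= u -> 1 <= replica u one2 N a b.
Proof. by move=> u0; rewrite -(replica0_one2 N a b) replica0_le. Qed.

Definition meet_prob t a b : R := replica 0 coinc t a b.

(* Decompose according to the first meeting time [t + 1]; by shift invariance the walks then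
   restart from a common point, which may be taken to be 0. *)
Lemma renewal u G N a b : shift_invariant G ->
  replica u G N a b =
  replica 0 G N a b + u * \sum_(0 <= t < N) meet_prob t.+1 a b * replica u G (N - t.+1) 0 0.
Proof.
move=> HG; elim: N a b => [|N IH] a b; first by rewrite big_geq // mulr0 addr0.
have E : (fun x y => (1 + u * coinc x y) * replica u G N x y) =
   (fun x y => (replica 0 G N x y +
                u * \sum_(0 <= t < N) meet_prob t.+1 x y * replica u G (N - t.+1) 0 0)
               + u * (coinc x y * replica u G N 0 0)).
  apply/funext=> x; apply/funext=> y; rewrite -IH mulrDl mul1r; congr (_ + _).
  rewrite /coinc; have [->|_] := eqVneq x y; last by rewrite /= mulr0 !mul0r mulr0.
  by rewrite replica_diag // mulrA.
rewrite /= E !avg4D !avg4Z avg4_sum -replica0S big_nat_recl // subSS subn0.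
rewrite -addrA mulrDr; congr (_ + _); rewrite addrC; congr (_ + _).
  by rewrite avg4Zr /meet_prob replica0S.
by congr (_ * _); apply: eq_bigr => t _; rewrite avg4Zr /meet_prob replica0S subSS.
Qed.

End Replica.

Section MeetingProbability.
Variable R : realType.

Definition binz n (z : int) : R := if z is Posz k then 'C(n, k)%:R else 0.

Lemma binzS n z : binz n.+1 (z + 1) = binz n z + binz n (z + 1).
Proof.
case: z => [k|[|k]].
- by rewrite -PoszD addn1 /= binS natrD addrC.
- by rewrite NegzE addNr /= !bin0 add0r.
- have -> : Negz k.+1 + 1 = Negz k by rewrite !NegzE; ring.
  by rewrite /= addr0.
Qed.

(* [X_t - Y_t] has the law of [2 (Bin(2t, 1/2) - t)]. *)
Lemma meet_probE t a b m : a - b = m *+ 2 ->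
  meet_prob R t a b = binz t.*2 (t%:Z + m) / 4%:R ^+ t.
Proof.
elim: t a b m => [|t IH] a b m Hab.
  rewrite /meet_prob /= /coinc expr0 divr1 add0r.
  have -> : (a == b) = (m == 0) by rewrite -subr_eq0 Hab mulrn_eq0.
  by case: m {Hab} => [[|k]|k] //=; rewrite bin0n.
rewrite /meet_prob replica0S /avg4 -!/(meet_prob _ _ _ _).
rewrite (IH _ _ m); last by rewrite -Hab; ring.
rewrite (IH _ _ (m + 1)); last by rewrite mulrnDl -Hab; ring.
rewrite (IH _ _ (m - 1)); last by rewrite mulrnBl -Hab; ring.
rewrite (IH _ _ m); last by rewrite -Hab; ring.
set z := t%:Z + m - 1.
have -> : t%:Z + m = z + 1 by rewrite /z; ring.
have -> : t%:Z + (m + 1) = z + 1 + 1 by rewrite /z; ring.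
have -> : t%:Z + (m - 1) = z by rewrite /z; ring.
have -> : t.+1%:Z + m = z + 1 + 1 by rewrite /z -addn1 PoszD; ring.
rewrite doubleS !binzS exprS.
by field; rewrite expf_neq0 // pnatr_eq0.
Qed.

Definition central_ratio t : R := 'C(t.*2, t)%:R / 4%:R ^+ t.

Lemma meet_prob00 t : meet_prob R t 0 0 = central_ratio t.
Proof. by rewrite (@meet_probE t 0 0 0) ?addr0 ?subrr ?mul0rn. Qed.

Lemma central_ratio_ge0 t : 0 <= central_ratio t.
Proof. by rewrite divr_ge0 // exprn_ge0. Qed.

Lemma mul_bin_central t : ('C(t.+1.*2, t.+1) * t.+1 = 2 * (t.*2.+1 * 'C(t.*2, t)))%N.
Proof.
have h1 := mul_bin_diag t.*2.+2 t; have h2 := mul_bin_down t.*2.+1 t.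
rewrite /= (_ : t.*2.+1 - t = t.+1)%N in h2; last by rewrite -addnn; lia.
rewrite doubleS; move: h1 h2.
set X := 'C(_.+1, t); set c := 'C(t.*2, t); set c' := 'C(_, t.+1).
rewrite -!addnn; nia.
Qed.

Lemma central_ratioS t :
  central_ratio t.+1 * (t.+1.*2)%:R = central_ratio t * (t.*2.+1)%:R.
Proof.
have h := congr1 (fun n => n%:R : R) (mul_bin_central t); rewrite /= !natrM in h.
rewrite /central_ratio.
have -> : ('C(t.+1.*2, t.+1))%:R = 2%:R * ((t.*2.+1)%:R * ('C(t.*2, t))%:R) / (t.+1)%:R :> R.
  by rewrite -h mulfK.
have -> : (t.+1.*2)%:R = 2%:R * (t.+1)%:R :> R by rewrite -natrM mul2n.
have -> : (4%:R : R) = 2%:R * 2%:R by rewrite -natrM.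
rewrite exprS; field.
by rewrite -natrM expf_neq0 ?pnatr_eq0 // addrC natr1 pnatr_eq0.
Qed.

Lemma central_ratio_sqr_le t : central_ratio t ^+ 2 * (t.*2.+1)%:R <= 1.
Proof.
elim: t => [|t IH]; first by rewrite /central_ratio /= bin0 expr0 divr1 expr1n mul1r.
have h := central_ratioS t; have a0 := central_ratio_ge0 t.
set x := (t%:R : R); have x0 : 0 <= x by rewrite ler0n.
have dblE k : (k.*2%:R : R) = 2 * k%:R by rewrite -mul2n natrM.
rewrite !doubleS -!natr1 !dblE -/x in h IH *.
move: h IH a0; set A := central_ratio t; set A' := central_ratio t.+1 => h IH a0.
have E : A' ^+ 2 * (2 * x + 1 + 1) ^+ 2 = A ^+ 2 * (2 * x + 1) ^+ 2 by rewrite -!exprMn h.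
have P : 0 < (2 * x + 1 + 1) ^+ 2 by rewrite exprn_gt0 //; lra.
rewrite -(ler_pM2r P) mul1r mulrAC E.
have Y0 : 0 <= (2 * x + 1) * (2 * x + 3) by nra.
have -> : A ^+ 2 * (2 * x + 1) ^+ 2 * (2 * x + 1 + 1 + 1) =
          A ^+ 2 * (2 * x + 1) * ((2 * x + 1) * (2 * x + 3)) by ring.
apply: le_trans (ler_wpM2r Y0 IH) _; nra.
Qed.

(* Each term is at most [1/sqrt(t+1) <= 2 (sqrt(t+1) - sqrt t)], which telescopes. *)
Lemma sum_central_ratio_le N : \sum_(0 <= t < N) central_ratio t.+1 <= 2 * Num.sqrt N%:R.
Proof.
elim: N => [|N IH]; first by rewrite big_geq // sqrtr0 mulr0.
rewrite big_nat_recr //=.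
set p := Num.sqrt (N%:R : R) in IH *; set q := Num.sqrt (N.+1%:R : R).
have p0 : 0 <= p := sqrtr_ge0 _.
have q0 : 0 < q by rewrite sqrtr_gt0 ltr0n.
have pp : p ^+ 2 = N%:R by rewrite sqr_sqrtr // ler0n.
have qq : q ^+ 2 = N%:R + 1 by rewrite sqr_sqrtr ?ler0n // -natr1.
have N0 : 0 <= (N%:R : R) by rewrite ler0n.
have A0 := central_ratio_ge0 N.+1; have As := central_ratio_sqr_le N.+1.
rewrite doubleS -!natr1 -mul2n natrM in As.
suff : central_ratio N.+1 <= 2 * q - 2 * p by lra.
move: A0 As; set A := central_ratio N.+1 => A0 As.
have Aq : (A * q) ^+ 2 <= 1.
  rewrite exprMn qq; apply: le_trans As; rewrite ler_wpM2l ?sqr_ge0 //; lra.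
have Aq1 : A * q <= 1.
  have Aq0 : 0 <= A * q by rewrite mulr_ge0 // ltW.
  nra.
rewrite -(ler_pM2r q0); nra.
Qed.

End MeetingProbability.

Section GeometricSums.
Variable R : realType.
Implicit Types y : R.

Definition geom y n := \sum_(0 <= k < n) y ^+ k.

Lemma geom_ge0 y n : 0 <= y -> 0 <= geom y n.
Proof. by move=> y0; apply: sumr_ge0 => k _; apply: exprn_ge0. Qed.

Lemma geomS y n : geom y n.+1 = 1 + y * geom y n.
Proof.
rewrite /geom big_nat_recl // expr0 mulr_sumr.
by congr (_ + _); apply: eq_bigr => k _; rewrite exprS.
Qed.

Lemma geom_le y y' m n : 0 <= y' -> y' <= y -> (m <= n)%N -> geom y' m <= geom y n.
Proof.
move=> y'0 le_y' le_mn; have y0 := le_trans y'0 le_y'.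
rewrite /geom (big_cat_nat (leq0n m) le_mn) /= -[leLHS]addr0 lerD //.
  by apply: ler_sum_nat => k _; rewrite lerXn2r ?nnegrE.
by apply: sumr_ge0 => k _; apply: exprn_ge0.
Qed.

Lemma geom_dilate y n : 0 <= y -> 1 + 4%:R * (y * geom y n) <= geom (4%:R * y) n.+1.
Proof.
move=> y0; rewrite geomS lerD2l -mulrA ler_wpM2l // ler_wpM2l //.
by apply: geom_le => //; lra.
Qed.

End GeometricSums.

Section SecondMomentZ.
Variables (R : realType) (u : R).
Hypothesis u_ge0 : 0 <= u.

Definition zmom N := replica u (one2 R) N 0 0.

Lemma zmom_ge1 N : 1 <= zmom N.
Proof. exact: replica_one2_ge1. Qed.

Lemma zmomE N : zmom N = 1 + u * \sum_(0 <= t < N) central_ratio R t.+1 * zmom (N - t.+1).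
Proof.
rewrite /zmom renewal ?replica0_one2 //.
by congr (_ + _ * _); apply: eq_bigr => t _; rewrite meet_prob00.
Qed.

Definition rate N := 2 * u * Num.sqrt (N%:R : R).

Lemma rate_ge0 N : 0 <= rate N.
Proof. by rewrite !mulr_ge0 ?sqrtr_ge0. Qed.

Lemma rate_le M N : (M <= N)%N -> rate M <= rate N.
Proof. by move=> le_MN; rewrite ler_wpM2l ?mulr_ge0 // ler_wsqrtr // ler_nat. Qed.

Lemma zmom_sub1_le N : zmom N - 1 <= rate N * geom (rate N) N.
Proof.
elim/ltn_ind: N => N IH; rewrite zmomE addrC addKr.
have step t : (t < N)%N -> zmom (N - t.+1) <= geom (rate N) N.
  move=> lt_tN; set M := (N - t.+1)%N.
  apply: le_trans (_ : 1 + rate M * geom (rate M) M <= _).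
    by rewrite -lerBlDl; apply: IH; rewrite /M; lia.
  by rewrite -geomS geom_le ?rate_ge0 ?rate_le /M //; lia.
apply: le_trans (_ : u * \sum_(0 <= t < N) central_ratio R t.+1 * geom (rate N) N <= _).
  rewrite ler_wpM2l //; apply: ler_sum_nat => t /andP [_ lt_tN].
  by rewrite ler_wpM2l ?central_ratio_ge0 ?step.
rewrite -mulr_suml mulrA ler_wpM2r ?geom_ge0 ?rate_ge0 //.
have -> : rate N = u * (2 * Num.sqrt N%:R) by rewrite /rate; ring.
by rewrite ler_wpM2l ?sum_central_ratio_le.
Qed.

Lemma zmom_le N : zmom N <= geom (4%:R * rate N) N.+1.
Proof.
apply: le_trans (geom_dilate _ (rate_ge0 N)).
have := zmom_sub1_le N; have := mulr_ge0 (rate_ge0 N) (geom_ge0 N (rate_ge0 N)); lra.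
Qed.

End SecondMomentZ.

Section FourthMoments.
Variable R : realType.
Implicit Types (x y a b : int) (s : R).

Definition Gsum x y : R := (x + y)%:~R ^+ 4.
Definition Gdiff x y : R := (x - y)%:~R ^+ 4.
Definition Gprod x y : R := x%:~R ^+ 2 * y%:~R ^+ 2.

(* [E (s + X_N +- Y_N)^4] for independent simple walks X, Y started at 0. *)
Definition moment4 N s : R := s ^+ 4 + 12%:R * N%:R * s ^+ 2 + 12%:R * N%:R ^+ 2 - 4%:R * N%:R.

Lemma replica0_Gdiff N a b : replica 0 Gdiff N a b = moment4 N (a - b)%:~R.
Proof.
elim: N a b => [|N IH] a b; first by rewrite /= /Gdiff /moment4; ring.
rewrite replica0S /avg4 !IH.
have -> : a + 1 - (b + 1) = a - b by ring.
have -> : a + 1 - (b - 1) = (a - b) + 2 by ring.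
have -> : a - 1 - (b + 1) = (a - b) - 2 by ring.
have -> : a - 1 - (b - 1) = a - b by ring.
by rewrite intrD intrB /moment4 -natr1; field.
Qed.

Lemma replica0_Gsum N a b : replica 0 Gsum N a b = moment4 N (a + b)%:~R.
Proof.
elim: N a b => [|N IH] a b; first by rewrite /= /Gsum /moment4; ring.
rewrite replica0S /avg4 !IH.
have -> : a + 1 + (b + 1) = (a + b) + 2 by ring.
have -> : a + 1 + (b - 1) = a + b by ring.
have -> : a - 1 + (b + 1) = a + b by ring.
have -> : a - 1 + (b - 1) = (a + b) - 2 by ring.
by rewrite intrD intrB /moment4 -natr1; field.
Qed.

Lemma replica0_Gprod N a b :
  replica 0 Gprod N a b = (a%:~R ^+ 2 + N%:R) * (b%:~R ^+ 2 + N%:R).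
Proof.
elim: N a b => [|N IH] a b; first by rewrite /= /Gprod !addr0.
by rewrite replica0S /avg4 !IH !intrD ?intrB -natr1; field.
Qed.

Lemma Gdiff_shift_invariant : shift_invariant Gdiff.
Proof. by move=> x y k; rewrite /Gdiff; congr (_ ^+ _); congr intmul; ring. Qed.

Lemma Gprod_le x y : Gprod x y <= (Gsum x y + Gdiff x y) / 16%:R.
Proof.
rewrite /Gprod /Gsum /Gdiff intrD intrB ler_pdivlMr ?ltr0n //.
set X := x%:~R : R; set Y := y%:~R : R.
have -> : (X + Y) ^+ 4 + (X - Y) ^+ 4 = X ^+ 2 * Y ^+ 2 * 16%:R + 2%:R * (X ^+ 2 - Y ^+ 2) ^+ 2
  by ring.
by rewrite lerDl mulr_ge0 ?sqr_ge0.
Qed.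

Definition sum_bound N s : R := s ^+ 4 + 24%:R * N%:R * s ^+ 2 + 48%:R * N%:R ^+ 2.

Lemma moment4_le_sum_bound N s : moment4 N s <= sum_bound N s.
Proof.
rewrite /moment4 /sum_bound.
have N0 : 0 <= (N%:R : R) by rewrite ler0n.
have : 0 <= (N%:R : R) * s ^+ 2 by rewrite mulr_ge0 // sqr_ge0.
nra.
Qed.

Lemma sum_bound_le_succ N s : sum_bound N s <= sum_bound N.+1 s.
Proof.
rewrite /sum_bound -natr1.
have N0 : 0 <= (N%:R : R) by rewrite ler0n.
have : 0 <= s ^+ 2 by rewrite sqr_ge0.
nra.
Qed.

Lemma sum_bound_pm2 N s : sum_bound N (s + 2) + sum_bound N (s - 2) <= 2 * sum_bound N.+1 s.
Proof.
rewrite /sum_bound -natr1; have N0 : 0 <= (N%:R : R) by rewrite ler0n.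
nra.
Qed.

Lemma avg4_sum_bound N (phi : int -> int -> R) a b :
  (forall x y, 0 <= phi x y) -> phi (a + 1) (b + 1) = phi (a - 1) (b - 1) ->
  avg4 (fun x y => sum_bound N (x + y)%:~R * phi x y) a b <=
  sum_bound N.+1 (a + b)%:~R * avg4 phi a b.
Proof.
move=> phi0 phi_sym; rewrite /avg4 mulrA ler_pM2r ?invr_gt0 ?ltr0n //.
have -> : a + 1 + (b + 1) = (a + b) + 2 by ring.
have -> : a + 1 + (b - 1) = a + b by ring.
have -> : a - 1 + (b + 1) = a + b by ring.
have -> : a - 1 + (b - 1) = (a + b) - 2 by ring.
rewrite intrD intrB phi_sym; set s := (a + b)%:~R : R.
have := sum_bound_pm2 N s; have := sum_bound_le_succ N s.
move: (phi0 (a + 1) (b - 1)) (phi0 (a - 1) (b + 1)) (phi0 (a - 1) (b - 1)).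
set p2 := phi _ _; set p3 := phi _ _; set p1 := phi _ _ => p2_0 p3_0 p1_0 le1 le2.
have := ler_wpM2r p1_0 le2; have := ler_wpM2r p2_0 le1; have := ler_wpM2r p3_0 le1.
nra.
Qed.

End FourthMoments.

Section SecondMomentK.
Variables (R : realType) (u : R).
Hypothesis u_ge0 : 0 <= u.

Lemma moment4_0_le N : moment4 N (0 : R) <= 12%:R * N%:R ^+ 2.
Proof. by rewrite /moment4 !expr0n /= mulr0 !add0r gerBl mulr_ge0 ?ler0n. Qed.

Lemma replica_Gdiff_sub_le N :
  replica u (Gdiff R) N 0 0 - moment4 N 0 <= 12%:R * N%:R ^+ 2 * (zmom u N - 1).
Proof.
elim/ltn_ind: N => N IH.
have Gdiff_le M : (M < N)%N -> replica u (Gdiff R) M 0 0 <= 12%:R * M%:R ^+ 2 * zmom u M.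
  move=> /IH; have := moment4_0_le M; lra.
rewrite renewal; last exact: Gdiff_shift_invariant.
rewrite replica0_Gdiff subrr addrC addKr.
rewrite zmomE addrC addKr mulrCA ler_wpM2l // mulr_sumr.
apply: ler_sum_nat => t /andP [_ lt_tN]; rewrite meet_prob00 mulrCA.
rewrite ler_wpM2l ?central_ratio_ge0 //; apply: le_trans (Gdiff_le _ _) _; first lia.
rewrite ler_wpM2r ?(le_trans ler01 (zmom_ge1 _ _)) // ler_wpM2l ?ler0n //.
by rewrite lerXn2r ?nnegrE ?ler0n // ler_nat leq_subr.
Qed.

(* Coincidences only depend on [x - y], so the weights at (a+1, b+1) and (a-1, b-1) agree; there
   [x + y] is [a + b + 2] and [a + b - 2], which [sum_bound_pm2] averages out. *)
Lemma replica_Gsum_sub_le N a b :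
  replica u (Gsum R) N a b - replica 0 (Gsum R) N a b <=
  sum_bound N (a + b)%:~R * (replica u (one2 R) N a b - 1).
Proof.
elim: N a b => [|N IH] a b; first by rewrite /= !subrr mulr0.
pose phi x y := (1 + u * coinc R x y) * replica u (one2 R) N x y - 1.
have phi_ge0 x y : 0 <= phi x y.
  have V1 := replica_one2_ge1 N x y u_ge0.
  by rewrite subr_ge0 (le_trans V1) // ler_peMl ?coinc_weight_ge1 // (le_trans ler01).
have phi_sym : phi (a + 1) (b + 1) = phi (a - 1) (b - 1).
  have -> : a + 1 = a - 1 + 2 by ring.
  have -> : b + 1 = b - 1 + 2 by ring.
  by rewrite /phi coinc_shift_invariant replica_shift.
have avg4_phi : avg4 phi a b = replica u (one2 R) N.+1 a b - 1.
  by rewrite /phi /= /avg4; field.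
rewrite -avg4_phi replica0S /=.
apply: le_trans (avg4_sum_bound N phi_ge0 phi_sym).
rewrite /avg4 -mulrBl ler_pM2r ?invr_gt0 ?ltr0n //.
have term x y : (1 + u * coinc R x y) * replica u (Gsum R) N x y - replica 0 (Gsum R) N x y <=
    sum_bound N (x + y)%:~R * phi x y.
  have c0 := mulr_ge0 u_ge0 (coinc_ge0 R x y).
  have := ler_wpM2l (addr_ge0 ler01 c0) (IH x y).
  have V0_le : replica 0 (Gsum R) N x y <= sum_bound N (x + y)%:~R.
    by rewrite replica0_Gsum moment4_le_sum_bound.
  have := ler_wpM2l c0 V0_le; rewrite /phi; nra.
have := term (a + 1) (b + 1); have := term (a + 1) (b - 1).
have := term (a - 1) (b + 1); have := term (a - 1) (b - 1).
lra.
Qed.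

Lemma replica_Gprod_le_zmom N :
  replica u (Gprod R) N 0 0 <= N%:R ^+ 2 * (1 + 4%:R * (zmom u N - 1)).
Proof.
pose H x y := 16%:R^-1 * Gsum R x y + (16%:R^-1 * Gdiff R x y + (-1) * Gprod R x y).
have H_ge0 x y : 0 <= H x y by have := Gprod_le R x y; rewrite /H; lra.
have hH := replica0_le u_ge0 N 0 0 H_ge0; rewrite /H !replicaD !replicaZ in hH.
have hS := replica_Gsum_sub_le N 0 0.
have hD := replica_Gdiff_sub_le N.
have F1 := zmom_ge1 u_ge0 N.
rewrite replica0_Gsum ?replica0_Gdiff ?replica0_Gprod ?addr0 ?subr0 ?mulr0z ?expr0n ?add0r in hH hS.
have sb0 : sum_bound N 0 = 48%:R * N%:R ^+ 2 :> R by rewrite /sum_bound !expr0n /= mulr0 !add0r.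
rewrite sb0 in hS.
move: hH hS hD F1; rewrite -expr2 -/(zmom u N).
set K := (N%:R : R) ^+ 2; set F := zmom u N => hH hS hD F1.
have : 0 <= K * (F - 1) by rewrite mulr_ge0 ?sqr_ge0 ?subr_ge0.
nra.
Qed.

Lemma replica_Gprod_le N : replica u (Gprod R) N 0 0 <= N%:R ^+ 2 * geom (4%:R * rate u N) N.+1.
Proof.
apply: le_trans (replica_Gprod_le_zmom N) _; rewrite ler_wpM2l ?sqr_ge0 //.
apply: le_trans (geom_dilate _ (rate_ge0 u_ge0 N)); rewrite lerD2l ler_wpM2l //.
exact: zmom_sub1_le.
Qed.

End SecondMomentK.

Section EnvironmentAverage.
Variable R : realType.

Definition walk_pair_sum (u : R) G N (a b : int) : R :=
  \sum_(w : walk N) \sum_(w' : walk N)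
    (\prod_(i < N) (1 + u * coinc R (a + wpos w i.+1) (b + wpos w' i.+1))) *
    G (a + wpos w N) (b + wpos w' N).

Lemma walk_pair_sumS (u : R) G N a b :
  walk_pair_sum u G N.+1 a b =
  \sum_(s : bool) \sum_(s' : bool)
    (1 + u * coinc R (a + bsign s) (b + bsign s')) *
    walk_pair_sum u G N (a + bsign s) (b + bsign s').
Proof.
rewrite /walk_pair_sum sum_walkS; apply: eq_bigr => s _.
under eq_bigr do rewrite sum_walkS.
rewrite exchange_big /=; apply: eq_bigr => s' _.
rewrite mulr_sumr; apply: eq_bigr => w _; rewrite mulr_sumr; apply: eq_bigr => w' _.
rewrite big_ord_recl /= !wpos_cons !wpos0 !addr0 -mulrA; congr (_ * _).
rewrite !addrA; congr (_ * _); apply: eq_bigr => i _.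
by rewrite /bump add1n !wpos_cons !addrA.
Qed.

Lemma walk_pair_sumE (u : R) G N a b :
  walk_pair_sum u G N a b = 4%:R ^+ N * replica u G N a b.
Proof.
elim: N a b => [|N IH] a b.
  rewrite /walk_pair_sum expr0 mul1r /=.
  pose w0 : walk 0 := [ffun i => false].
  have walk0 w : w == w0 by apply/eqP/ffunP => -[].
  by rewrite !(big_pred1 w0) ?big_ord0 ?mul1r ?wpos0 ?addr0 // => w; rewrite /= walk0.
rewrite walk_pair_sumS !big_bool /= !IH /avg4 /bsign exprS.
by field.
Qed.

Definition Zgen N (c : R) (gam : int -> R) (h : env N) : R :=
  2%:R ^- N * \sum_(w : walk N) (\prod_(i < N) (1 + c * hval h i (wpos w i.+1))) * gam (wpos w N).

Lemma card_env N : #|{: env N}| = (#|{: {ffun 'I_(N + N).+1 -> bool}}| ^ N)%N.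
Proof. by rewrite card_ffun card_ord. Qed.

(* The environment is independent across times, so the average factorises over [i]. *)
Lemma sum_env_pair N (c : R) (x y : 'I_N -> int) :
  \sum_(h : env N) \prod_(i < N) ((1 + c * hval h i (x i)) * (1 + c * hval h i (y i))) =
  #|{: {ffun 'I_(N + N).+1 -> bool}}|%:R ^+ N *
  \prod_(i < N) (1 + c ^+ 2 * (site N (x i) == site N (y i))%:R).
Proof.
rewrite -(bigA_distr_bigA (fun i (g : {ffun 'I_(N + N).+1 -> bool}) =>
  (1 + c * bsign (g (site N (x i)))) * (1 + c * bsign (g (site N (y i)))))) /=.
by under eq_bigr do rewrite sum_bsign_pair; rewrite big_split prodr_const card_ord.
Qed.

Lemma sum_env_walk_pair N (c : R) (w w' : walk N) :
  \sum_(h : env N) (\prod_(i < N) (1 + c * hval h i (wpos w i.+1))) *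
                   (\prod_(i < N) (1 + c * hval h i (wpos w' i.+1))) =
  #|{: {ffun 'I_(N + N).+1 -> bool}}|%:R ^+ N *
  \prod_(i < N) (1 + c ^+ 2 * coinc R (0 + wpos w i.+1) (0 + wpos w' i.+1)).
Proof.
under eq_bigr do rewrite -big_split /=.
rewrite sum_env_pair; congr (_ * _); apply: eq_bigr => i _.
by rewrite eq_site ?wpos_le // !add0r.
Qed.

Lemma EQ_Zgen_sqr N (c : R) (gam : int -> R) :
  EQ (fun h : env N => Zgen c gam h ^+ 2) = replica (c ^+ 2) (fun x y => gam x * gam y) N 0 0.
Proof.
set K := #|{: {ffun 'I_(N + N).+1 -> bool}}|.
have K0 : (K%:R : R) != 0 by rewrite pnatr_eq0 /K card_ffun expn_eq0 card_bool.
pose A h (w : walk N) := \prod_(i < N) (1 + c * hval h i (wpos w i.+1)).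
have sqrE h : Zgen c gam h ^+ 2 = 2%:R ^- N ^+ 2 *
    \sum_(w : walk N) \sum_(w' : walk N) gam (wpos w N) * gam (wpos w' N) * (A h w * A h w').
  rewrite /Zgen exprMn; congr (_ * _); rewrite expr2 mulr_suml; apply: eq_bigr => w _.
  by rewrite mulr_sumr; apply: eq_bigr => w' _; rewrite /A; ring.
rewrite /EQ; under eq_bigr do rewrite sqrE.
rewrite -mulr_sumr exchange_big; under eq_bigr do rewrite exchange_big.
under eq_bigr do under eq_bigr do rewrite -mulr_sumr sum_env_walk_pair.
have two0 : (2%:R ^+ N : R) != 0 by rewrite expf_neq0 // pnatr_eq0.
have four0 : (4%:R ^+ N : R) = (2%:R ^+ N) ^+ 2.
  by rewrite -exprM mulnC exprM [2%:R ^+ 2]expr2 -natrM.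
rewrite -[RHS](mulKf (_ : 4%:R ^+ N != 0)); last by rewrite four0 expf_neq0.
rewrite -walk_pair_sumE /walk_pair_sum card_env natrX four0.
rewrite !mulr_sumr; apply: eq_bigr => w _; rewrite !mulr_sumr; apply: eq_bigr => w' _.
by rewrite !add0r; field; rewrite two0 expf_neq0.
Qed.

Lemma EQ_Zpart_sqr N (c : R) : EQ (fun h : env N => Zpart c h ^+ 2) = zmom (c ^+ 2) N.
Proof.
have -> : (fun h : env N => Zpart c h ^+ 2) = (fun h => Zgen c (fun=> 1) h ^+ 2).
  apply/funext => h; rewrite /Zpart /Zgen; congr (_ ^+ 2); congr (_ * _).
  by apply: eq_bigr => w _; rewrite mulr1.
by rewrite EQ_Zgen_sqr /zmom; congr replica; do 2!apply/funext => ?; rewrite mulr1.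
Qed.

Lemma EQ_Kpart_sqr N (c : R) :
  EQ (fun h : env N => Kpart c h ^+ 2) = replica (c ^+ 2) (Gprod R) N 0 0.
Proof. exact: (EQ_Zgen_sqr N c (fun x => x%:~R ^+ 2)). Qed.

End EnvironmentAverage.

Theorem proposition1 (R : realType) :
  exists c1 : R, 0 < c1 /\
  forall c : nat -> R,
    (forall N, 0 < c N) ->
    (fun N : nat => c N ^+ 2 * Num.sqrt (N%:R)) @ \oo --> (0 : R) ->
    forall N : nat, (1 <= N)%N ->
      EQ (fun h : env N => Zpart (c N) h ^+ 2)
        <= \sum_(0 <= n < N.+1) (c1 * c N ^+ 2 * Num.sqrt (N%:R)) ^+ n
   /\ EQ (fun h : env N => Kpart (c N) h ^+ 2)
        <= (N%:R) ^+ 2 * \sum_(0 <= n < N.+1) (c1 * c N ^+ 2 * Num.sqrt (N%:R)) ^+ n.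
Proof.
exists 8%:R; split => // c _ _ N _.
have u_ge0 : 0 <= c N ^+ 2 := sqr_ge0 _.
have -> : 8%:R * c N ^+ 2 * Num.sqrt N%:R = 4%:R * rate (c N ^+ 2) N by rewrite /rate; ring.
rewrite EQ_Zpart_sqr EQ_Kpart_sqr.
by split; [apply: zmom_le | apply: replica_Gprod_le].
Qed.
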